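(* Let $h:(\mathbb{R}^n,0)\to(\mathbb{R}^n,0)$ be a Lipschitz homeomorphism germ such that $c_1\|x\|\le\|h(x)\|\le c_2\|x\|$ for some constants $c_1,c_2>0$ and all $x$ in a neighbourhood of $0$, and let $A\subset\mathbb{R}^n$ be a set-germ at $0$ with $0\in\overline{A}$. Suppose that $A$ satisfies condition (SSP) and that $h$ is an (SSP) map. Then $h(A)$ satisfies condition (SSP).
   Context: For a set-germ $A\subset\mathbb{R}^k$ at $0$ with $0\in\overline A$, $D(A)=\{a\in S^{k-1}:\exists\, x_i\in A\setminus\{0\},\ x_i\to0,\ x_i/\|x_i\|\to a\}$. For sequences, $\|u_m\|\ll\|v_m\|,\|w_m\|$ means $\|u_m\|/\|v_m\|\to0$ and $\|u_m\|/\|w_m\|\to0$. A set-germ $A\subset\mathbb{R}^k$ satisfies condition (SSP) if for every sequence $a_m\in\mathbb{R}^k$ tending to $0$ with $\lim a_m/\|a_m\|\in D(A)$ there is a sequence $b_m\in A$ with $\|a_m-b_m\|\ll\|a_m\|,\|b_m\|$. A map germ $h:(\mathbb{R}^n,0)\to(\mathbb{R}^n,0)$ is an (SSP) map if its graph $\{(x,h(x))\}\subset\mathbb{R}^n\times\mathbb{R}^n$ satisfies condition (SSP) at $(0,0)$. *)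

From HB Require Import structures.
From mathcomp Require Import all_boot all_order all_algebra.
From mathcomp Require Import all_classical all_reals all_analysis.
Set Implicit Arguments. Unset Strict Implicit. Unset Printing Implicit Defensive.
Import Order.TTheory GRing.Theory Num.Theory.
Import numFieldNormedType.Exports.
Local Open Scope classical_set_scope.
Local Open Scope ring_scope.

Section SSPDefs.
Variable R : realType.

Definition enorm (k : nat) (v : 'rV[R]_k) : R :=
  Num.sqrt (\sum_(i < k) (v ord0 i) ^+ 2).

Definition eball0 (k : nat) (r : R) : set 'rV[R]_k := [set x | enorm x < r].

Definition Dir (k : nat) (A : set 'rV[R]_k) : set 'rV[R]_k :=
  [set a | enorm a = 1 /\
     exists x : nat -> 'rV[R]_k,
       (forall i, A (x i) /\ x i != 0) /\
       x @ \oo --> (0 : 'rV[R]_k) /\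
       (fun i => (enorm (x i))^-1 *: x i) @ \oo --> a].

(* ||u_m|| << ||v_m|| : ||u_m|| / ||v_m|| -> 0, stated without division *)
Definition ll (k : nat) (u v : nat -> 'rV[R]_k) : Prop :=
  forall e : R, 0 < e -> \forall m \near \oo, enorm (u m) <= e * enorm (v m).

Definition SSP (k : nat) (A : set 'rV[R]_k) : Prop :=
  forall (a : nat -> 'rV[R]_k) (d : 'rV[R]_k),
    a @ \oo --> (0 : 'rV[R]_k) ->
    (fun m => (enorm (a m))^-1 *: a m) @ \oo --> d ->
    Dir A d ->
    exists b : nat -> 'rV[R]_k,
      (forall m, A (b m)) /\
      ll (fun m => a m - b m) a /\ ll (fun m => a m - b m) b.

(* graph of h over U, as a subset of R^n x R^n = R^(n+n) *)
Definition graph (n : nat) (h : 'rV[R]_n -> 'rV[R]_n) (U : set 'rV[R]_n)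
  : set 'rV[R]_(n + n) :=
  [set row_mx x (h x) | x in U].

End SSPDefs.

From HB Require Import structures.
From mathcomp Require Import all_boot all_order all_algebra.
From mathcomp Require Import all_classical all_reals all_analysis.
From mathcomp Require Import lra.
Import Order.TTheory GRing.Theory Num.Theory.
Import numFieldNormedType.Exports.
Local Open Scope classical_set_scope.
Local Open Scope ring_scope.

(* Let a_m -> 0 with a_m/|a_m| -> d in D(h(A)).  Lifting a sequence
   h(y_j) of image points with direction d, the bounds c1|x| <= |h x| <= c2|x|
   make y_j/|h y_j| subconverge to some w <> 0; then w/|w| is in D(A) and
   (w,d)/|(w,d)| is in D(graph h).  (SSP) for the graph approximates the ray
   |a_m|(w,d) by graph points (x_m, h x_m), so x_m ~ |a_m| w and
   h x_m ~ |a_m| d ~ a_m.  (SSP) for A approximates x_m by b_m in A, and the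
   Lipschitz bound gives h b_m ~ h x_m, all errors being o(|a_m|). *)

Set Implicit Arguments. Unset Strict Implicit.

Section EuclideanNorm.
Variable R : realType.
Implicit Types (k : nat).

Lemma enorm_ge0 k (v : 'rV[R]_k) : 0 <= enorm v.
Proof. exact: sqrtr_ge0. Qed.

Lemma normr_coord_le_enorm k (v : 'rV[R]_k) i : `|v ord0 i| <= enorm v.
Proof.
rewrite -sqrtr_sqr; apply: ler_wsqrtr.
by rewrite (bigD1 i) //= lerDl sumr_ge0 // => j _; exact: sqr_ge0.
Qed.

Lemma normr_coord_le k (v : 'rV[R]_k) i : `|v ord0 i| <= `|v|.
Proof.
by rewrite [leRHS]/Num.Def.normr /= mx_normrE; apply/bigmax_geP; right; exists (ord0, i).
Qed.

Lemma normr_le_coord k (v : 'rV[R]_k) c :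
  0 <= c -> (forall i, `|v ord0 i| <= c) -> `|v| <= c.
Proof.
move=> c0 vc; rewrite /Num.Def.normr /= mx_normrE (bigmax_le _ c0) // => -[i j] _ /=.
by rewrite (ord1 i).
Qed.

Lemma normr_le_enorm k (v : 'rV[R]_k) : `|v| <= enorm v.
Proof. by apply: normr_le_coord; [exact: enorm_ge0 | exact: normr_coord_le_enorm]. Qed.

(* The constant [k.+1] rather than [sqrt k] keeps it positive also for [k = 0]. *)
Lemma enorm_le_normr k (v : 'rV[R]_k) : enorm v <= k.+1%:R * `|v|.
Proof.
have sum_le : \sum_(i < k) v ord0 i ^+ 2 <= k.+1%:R ^+ 2 * `|v| ^+ 2.
  apply: (@le_trans _ _ (\sum_(i < k) `|v| ^+ 2)).
    apply: ler_sum => i _; rewrite -real_normK ?num_real //.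
    by rewrite lerXn2r ?nnegrE ?normr_coord_le.
  rewrite sumr_const card_ord -[_ *+ k]mulr_natr [leRHS]mulrC ler_wpM2l ?sqr_ge0 //.
  by rewrite -natrX ler_nat (leq_trans (leqnSn k)) // expnS leq_pmulr // expn_gt0.
rewrite /enorm -[leRHS]ger0_norm ?mulr_ge0 // -sqrtr_sqr exprMn.
exact: ler_wsqrtr.
Qed.

Lemma enormZ k (c : R) (v : 'rV[R]_k) : enorm (c *: v) = `|c| * enorm v.
Proof.
rewrite /enorm (eq_bigr (fun i => c ^+ 2 * v ord0 i ^+ 2)); last first.
  by move=> i _; rewrite mxE exprMn.
by rewrite -mulr_sumr sqrtrM ?sqr_ge0 // sqrtr_sqr.
Qed.

Lemma enorm_gt0 k (v : 'rV[R]_k) : v != 0 -> 0 < enorm v.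
Proof.
by move=> v0; apply: lt_le_trans (normr_le_enorm v); rewrite normr_gt0.
Qed.

Lemma enorm0 k : enorm (0 : 'rV[R]_k) = 0.
Proof. by rewrite -(scale0r 0) enormZ normr0 mul0r. Qed.

Lemma enorm_continuous k : continuous (@enorm R k).
Proof.
move=> v; apply: continuous_comp; last exact: sqrt_continuous.
have sum_cont (s : seq 'I_k) :
    continuous (fun u : 'rV[R]_k => \sum_(i <- s) u ord0 i ^+ 2).
  elim: s => [|i s IHs].
    by under eq_fun do rewrite big_nil; exact: cst_continuous.
  under eq_fun do rewrite big_cons.
  move=> u; apply: continuousD (IHs u); apply: continuousM; exact: coord_continuous.
exact: sum_cont.
Qed.

End EuclideanNorm.

Lemma cvg_subseq (T : topologicalType) (f : nat -> T) (l : T) (s : nat -> nat) :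
  (forall j, (j <= s j)%N) -> f @ \oo --> l -> (f \o s) @ \oo --> l.
Proof.
move=> s_ge fl; apply: cvg_comp fl => P [N _ NP].
by exists N => // j /= Nj; apply: NP; exact: leq_trans Nj (s_ge j).
Qed.

Lemma patch_near (T : Type) (S : set T) (b : nat -> T) (y0 : T) :
  S y0 -> (\forall m \near \oo, S (b m)) ->
  exists b' : nat -> T, (forall m, S (b' m)) /\ \forall m \near \oo, b' m = b m.
Proof.
move=> Sy0 Sb; exists (fun m => if pselect (S (b m)) is left _ then b m else y0).
split=> [m|]; first by case: pselect.
by apply: filterS Sb => m Sbm; case: pselect.
Qed.

Section Asymptotics.
Variable R : realType.

Lemma bigO_cvg0 (T : Type) (F : filter_on T) (V W : normedModType R)
    (u : T -> V) (v : T -> W) :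
  u =O_F v -> v @ F --> 0 -> u @ F --> 0.
Proof. by move=> uOv /eqolim0P v0; apply/eqolim0P; exact: eqOo_trans uOv v0. Qed.

Lemma bigO_littleo_sub (T : Type) (F : filter_on T) (V W : normedModType R)
    (u v : T -> V) (e : T -> W) :
  u =O_F e -> u - v =o_F e -> v =O_F e.
Proof.
move=> uOe uvoe; have -> : v = u - (u - v) by rewrite opprB addrC subrK.
have uvOe : u - v =O_F e by rewrite uvoe.
exact: add2O uOe (oppfO _ uvOe).
Qed.

Lemma littleo_near_eq (T : Type) (F : filter_on T) (V W : normedModType R)
    (u v : T -> V) (e : T -> W) :
  (\forall x \near F, u x = v x) -> u =o_F e -> v =o_F e.
Proof.
move=> uv /eqoP uoe; apply/eqoP => eps eps0.
by apply: filterS2 uv (uoe _ eps0) => x <-.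
Qed.

End Asymptotics.

Section RowSequences.
Variable R : realType.
Implicit Types (k : nat).

Lemma enorm_le_bigO k1 k2 (u : nat -> 'rV[R]_k1) (v : nat -> 'rV[R]_k2) (C : R) :
  0 <= C -> (\forall m \near \oo, enorm (u m) <= C * enorm (v m)) -> u =O_\oo v.
Proof.
move=> C0 uv; apply/eqO_exP; exists (C * k2.+1%:R + 1).
  by rewrite ltr_wpDl ?mulr_ge0.
apply: filterS uv => m uv; rewrite (le_trans (normr_le_enorm _)) // (le_trans uv) //.
have := enorm_le_normr (v m); have := normr_ge0 (v m); nra.
Qed.

(* [ll] is measured with [enorm], MathComp's little-o with the sup norm of
   matrices; the two norms differ by at most the factor [k.+1]. *)
Lemma ll_eqo k (u v : nat -> 'rV[R]_k) : ll u v <-> u =o_\oo v.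
Proof.
have k0 : 0 < k.+1%:R :> R by rewrite ltr0n.
split => [uv | /eqoP uv e e0].
- apply/eqoP => e e0; apply: filterS (uv (e / k.+1%:R) _); last by rewrite divr_gt0.
  move=> m uvm; rewrite (le_trans (normr_le_enorm _)) // (le_trans uvm) //.
  rewrite (le_trans (ler_wpM2l (divr_ge0 (ltW e0) (ltW k0)) (enorm_le_normr _))) //.
  by rewrite mulrA divfK ?gt_eqF.
- apply: filterS (uv (e / k.+1%:R) _); last by rewrite divr_gt0.
  move=> m uvm; rewrite (le_trans (enorm_le_normr _)) //.
  rewrite (le_trans (ler_wpM2l (ltW k0) uvm)) //.
  rewrite mulrA [_ * (e / _)]mulrC divfK ?gt_eqF //.
  by rewrite ler_wpM2l ?normr_le_enorm // ltW.
Qed.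

Lemma normr_row_mx_le k (u v : 'rV[R]_k) : `|row_mx u v| <= `|u| + `|v|.
Proof.
apply: normr_le_coord => [|i]; first by rewrite addr_ge0.
case: (split_ordP i) => j ->; [rewrite row_mxEl | rewrite row_mxEr].
  by rewrite (le_trans (normr_coord_le u j)) // lerDl.
by rewrite (le_trans (normr_coord_le v j)) // lerDr.
Qed.

Lemma normr_le_row_mxl k (u v : 'rV[R]_k) : `|u| <= `|row_mx u v|.
Proof. by apply: normr_le_coord => // i; rewrite -(row_mxEl u v) normr_coord_le. Qed.

Lemma normr_le_row_mxr k (u v : 'rV[R]_k) : `|v| <= `|row_mx u v|.
Proof. by apply: normr_le_coord => // i; rewrite -(row_mxEr u v) normr_coord_le. Qed.

Lemma cvg_row_mx k (u v : nat -> 'rV[R]_k) (lu lv : 'rV[R]_k) :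
  u @ \oo --> lu -> v @ \oo --> lv ->
  (fun m => row_mx (u m) (v m)) @ \oo --> row_mx lu lv.
Proof.
move=> /cvgrPdist_le ulu /cvgrPdist_le vlv; apply/cvgrPdist_le => e e0.
have e2 : 0 < e / 2 by rewrite divr_gt0.
apply: filterS2 (ulu _ e2) (vlv _ e2) => m um vm.
rewrite opp_row_mx add_row_mx (le_trans (normr_row_mx_le _ _)) //.
by rewrite (splitr e) lerD.
Qed.

Lemma row_mxl_eqO k (u v : nat -> 'rV[R]_k) :
  u =O_\oo (fun m => row_mx (u m) (v m)).
Proof.
by apply/eqO_exP; exists 1 => //; apply: nearW => m; rewrite mul1r normr_le_row_mxl.
Qed.

Lemma row_mxr_eqO k (u v : nat -> 'rV[R]_k) :
  v =O_\oo (fun m => row_mx (u m) (v m)).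
Proof.
by apply/eqO_exP; exists 1 => //; apply: nearW => m; rewrite mul1r normr_le_row_mxr.
Qed.

Lemma bounded_subseq_cvg k (v : nat -> 'rV[R]_k) (M : R) :
  (forall j, `|v j| <= M) ->
  exists s : nat -> nat, exists w : 'rV[R]_k,
    (forall j, (j <= s j)%N) /\ (v \o s) @ \oo --> w.
Proof.
move=> vM; have M1 : 0 < M + 1 by rewrite ltr_wpDl // (le_trans _ (vM 0%N)).
have ball_cpt : compact (closed_ball (0 : 'rV[R]_k) (M + 1)).
  apply: bounded_closed_compact; last exact: closed_ball_closed.
  exists (M + 1); split; first exact: num_real.
  move=> M' MM' x; rewrite closed_ballE // /closed_ball_ /= sub0r normrN => x_le.
  exact: le_trans x_le (ltW MM').
have [w [_ w_cluster]] : closed_ball 0 (M + 1) `&` cluster (v @ \oo) !=set0.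
  apply: ball_cpt; exists 0%N => // j _ /=.
  by rewrite closed_ballE // /closed_ball_ /= sub0r normrN (le_trans (vM j)) // lerDl.
have /choice [s sP] j : exists i, (j <= i)%N /\ `|w - v i| < j.+1%:R^-1.
  have vj : (v @ \oo) [set v i | i in [set i | (j <= i)%N]].
    by exists j => // i /= ji; exists i.
  have wj : nbhs w (ball w j.+1%:R^-1) by apply: nbhsx_ballx; rewrite invr_gt0.
  by have [_ [[i ji <-]]] := w_cluster _ _ vj wj; rewrite -ball_normE; exists i.
exists s, w; split => [j|]; first by case: (sP j).
apply/cvgrPdist_le => e e0.
apply: filterS (near_infty_natSinv_lt (PosNum e0)) => j /= je.
exact/ltW/(lt_trans (sP j).2 je).
Qed.

Definition normalize k (x : 'rV[R]_k) := (enorm x)^-1 *: x.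

Lemma normalizeZ k (c : R) (x : 'rV[R]_k) : 0 < c -> normalize (c *: x) = normalize x.
Proof.
move=> c0; rewrite /normalize enormZ gtr0_norm // invfM scalerA mulrAC.
by rewrite mulVf ?mul1r // gt_eqF.
Qed.

Lemma enorm_normalize k (x : 'rV[R]_k) : x != 0 -> enorm (normalize x) = 1.
Proof.
move=> x0; rewrite /normalize enormZ ger0_norm ?invr_ge0 ?enorm_ge0 //.
by rewrite mulVf // gt_eqF // enorm_gt0.
Qed.

Lemma normalizeK k (x : 'rV[R]_k) : enorm x *: normalize x = x.
Proof.
have [->|x0] := eqVneq x 0; first by rewrite enorm0 scale0r.
by rewrite /normalize scalerA mulfV ?scale1r // gt_eqF // enorm_gt0.
Qed.

Lemma normalize_continuous k (x : 'rV[R]_k) :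
  x != 0 -> {for x, continuous (@normalize k)}.
Proof.
move=> x0; have inv_enorm : (enorm y)^-1 @[y --> x] --> (enorm x)^-1.
  have ex0 : enorm x != 0 by rewrite gt_eqF // enorm_gt0.
  have ex : enorm y @[y --> x] --> enorm x by exact: enorm_continuous.
  exact: cvgV ex0 ex.
exact: cvgZ inv_enorm cvg_id.
Qed.

Lemma cvg_normalize_neq0 k (a : nat -> 'rV[R]_k) (d : 'rV[R]_k) :
  (fun m => normalize (a m)) @ \oo --> d -> d != 0 -> \forall m \near \oo, a m != 0.
Proof.
move=> /cvgrPdist_lt ad d0; have := ad `|d|; rewrite normr_gt0 => /(_ d0).
apply: filterS => m.
by apply: contraTneq => ->; rewrite /normalize scaler0 subr0 ltxx.
Qed.

Lemma normalize_cvg_eqo k (a : nat -> 'rV[R]_k) (d : 'rV[R]_k) :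
  (fun m => normalize (a m)) @ \oo --> d -> (fun m => a m - enorm (a m) *: d) =o_\oo a.
Proof.
move=> /cvgrPdist_le ad; apply/eqoP => e e0.
have k0 : 0 < k.+1%:R :> R by rewrite ltr0n.
apply: filterS (ad _ (divr_gt0 e0 k0)) => m adm.
rewrite -{1}(normalizeK (a m)) -scalerBr normrZ ger0_norm ?enorm_ge0 // distrC.
rewrite (le_trans (ler_wpM2l (enorm_ge0 _) adm)) // mulrC.
rewrite (le_trans (ler_wpM2l (divr_ge0 (ltW e0) (ltW k0)) (enorm_le_normr _))) //.
by rewrite mulrA divfK ?gt_eqF.
Qed.

Lemma eqo_normalize_cvg k (a x : nat -> 'rV[R]_k) (w : 'rV[R]_k) :
  (fun m => enorm (a m) *: w - x m) =o_\oo a -> (\forall m \near \oo, a m != 0) ->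
  w != 0 -> (fun m => normalize (x m)) @ \oo --> normalize w.
Proof.
move=> /eqoP xw a0 w0.
have xaw : (fun m => (enorm (a m))^-1 *: x m) @ \oo --> w.
  apply/cvgrPdist_le => e e0; apply: filterS2 a0 (xw _ e0) => m am xwm.
  have t0 : 0 < enorm (a m) by rewrite enorm_gt0.
  rewrite -[w](scalerK (lt0r_neq0 t0)) -scalerBr normrZ ger0_norm ?invr_ge0 ?(ltW t0) //.
  rewrite mulrC ler_pdivrMr // (le_trans xwm) //.
  by rewrite ler_wpM2l ?normr_le_enorm // ltW.
apply: cvg_trans (cvg_comp _ _ xaw (normalize_continuous w0)).
apply: near_eq_cvg; apply: filterS a0 => m am /=.
by rewrite normalizeZ // invr_gt0 enorm_gt0.
Qed.

Lemma Dir_normalize k (A : set 'rV[R]_k) (x u : nat -> 'rV[R]_k) (c : nat -> R)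
    (l : 'rV[R]_k) :
  (forall j, A (x j) /\ x j != 0) -> x @ \oo --> (0 : 'rV[R]_k) ->
  (forall j, 0 < c j /\ x j = c j *: u j) -> u @ \oo --> l -> l != 0 ->
  Dir A (normalize l).
Proof.
move=> Ax x0 xcu ul l0; split; first exact: enorm_normalize.
exists x; split; [exact: Ax | split => //].
apply: cvg_trans (cvg_comp _ _ ul (normalize_continuous l0)).
apply: near_eq_cvg; apply: nearW => j /=.
by have [c0 ->] := xcu j; rewrite -[X in _ = X]/(normalize _) normalizeZ.
Qed.

Lemma ll_sub_eqo k (a b : nat -> 'rV[R]_k) :
  (fun m => a m - b m) =o_\oo a ->
  ll (fun m => a m - b m) a /\ ll (fun m => a m - b m) b.
Proof.
move=> abo; split; first exact/ll_eqo.
have ba : b ~_\oo a.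
  by apply/eqaddoP/eqoP; rewrite -opprB; exact: oppfo abo.
by apply/ll_eqo/eqoP/eqaddoP; exact: equiv_sym.
Qed.

End RowSequences.

Section SSPImage.
Variables (R : realType) (n : nat) (h : 'rV[R]_n -> 'rV[R]_n) (r c1 c2 L : R).
Hypotheses (c1_gt0 : 0 < c1) (c2_gt0 : 0 < c2) (h0 : h 0 = 0).
Hypothesis h_bounds : forall x, eball0 r x ->
  c1 * enorm x <= enorm (h x) /\ enorm (h x) <= c2 * enorm x.

Lemma preimage_eqO (y s : nat -> 'rV[R]_n) :
  (forall j, eball0 r (y j) /\ h (y j) = s j) -> y =O_\oo s.
Proof.
move=> yP; apply: (enorm_le_bigO (C := c1^-1)); first by rewrite invr_ge0 ltW.
by apply: nearW => j; have [By <-] := yP j; rewrite ler_pdivlMl // (h_bounds By).1.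
Qed.

(* The bounds on [h] confine the rescaled preimages to the annulus
   [c2^-1 <= enorm v <= c1^-1], hence a nonzero limit along a subsequence. *)
Lemma rescaled_preimage_subseq (y s : nat -> 'rV[R]_n) :
  (forall j, eball0 r (y j) /\ h (y j) = s j) -> (forall j, s j != 0) ->
  exists s' : nat -> nat, exists w : 'rV[R]_n,
    w != 0 /\ (forall j, (j <= s' j)%N) /\
    (fun j => (enorm (s (s' j)))^-1 *: y (s' j)) @ \oo --> w.
Proof.
move=> yP s_neq0; pose v j := (enorm (s j))^-1 *: y j.
have hy j : c1 * enorm (y j) <= enorm (s j) /\ enorm (s j) <= c2 * enorm (y j).
  by have [By <-] := yP j; exact: h_bounds.
have s_gt0 j : 0 < enorm (s j) by rewrite enorm_gt0.
have enorm_v j : enorm (v j) = enorm (y j) / enorm (s j).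
  by rewrite /v enormZ ger0_norm ?invr_ge0 ?enorm_ge0 // mulrC.
have v_le j : `|v j| <= c1^-1.
  rewrite (le_trans (normr_le_enorm _)) // enorm_v ler_pdivrMr //.
  by rewrite ler_pdivlMl // (hy j).1.
have v_ge j : c2^-1 <= enorm (v j).
  by rewrite enorm_v ler_pdivlMr // ler_pdivrMl // (hy j).2.
have [s' [w [s'_ge vw]]] := bounded_subseq_cvg v_le.
exists s', w; split => //.
have : c2^-1 <= enorm w.
  apply: (@closed_cvg _ _ \oo _ (fun j => enorm (v (s' j))) _ (@closed_ge R c2^-1)).
    by apply: nearW => j; exact: v_ge.
  exact: cvg_comp _ _ vw (@enorm_continuous R n w).
by apply: contraTneq => ->; rewrite enorm0 -ltNge invr_gt0.
Qed.

Lemma Dir_image_lift (A : set 'rV[R]_n) (d : 'rV[R]_n) :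
  Dir (h @` (A `&` eball0 r)) d ->
  exists w, w != 0 /\ Dir A (normalize w) /\
    Dir (graph h (eball0 r)) (normalize (row_mx w d)).
Proof.
move=> [_ [s [s_in [s0 sd]]]].
have /choice [y yP] j : exists y, (A `&` eball0 r) y /\ h y = s j.
  by case: (s_in j).1 => y Ay <-; exists y.
have yB j : eball0 r (y j) /\ h (y j) = s j by case: (yP j) => -[].
have s_neq0 j : s j != 0 := (s_in j).2.
have s_gt0 j : 0 < enorm (s j) by rewrite enorm_gt0.
have y_sv j : y j = enorm (s j) *: ((enorm (s j))^-1 *: y j).
  by rewrite scalerA mulfV ?scale1r // gt_eqF.
have [s' [w [w0 [s'_ge vw]]]] := rescaled_preimage_subseq yB s_neq0.
have ys0 := cvg_subseq s'_ge (bigO_cvg0 (preimage_eqO yB) s0).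
have ss0 := cvg_subseq s'_ge s0; have ssd := cvg_subseq s'_ge sd.
exists w; split => //; split.
- apply: (Dir_normalize (x := y \o s') (c := fun j => enorm (s (s' j)))) vw w0 => // j.
    split; first exact: (yP _).1.1.
    by apply: contra_neq (s_neq0 (s' j)) => y0; rewrite -(yP _).2 [y _]y0.
  by split; [exact: s_gt0 | exact: y_sv].
- apply: (Dir_normalize (x := fun j => row_mx (y (s' j)) (s (s' j)))
    (c := fun j => enorm (s (s' j)))) (cvg_row_mx vw ssd) _ => [j||j|].
  + split; first by exists (y (s' j)); [exact: (yB _).1 | rewrite (yB _).2].
    apply: contra_neq (s_neq0 (s' j)) => ys0'.
    have := normr_le_row_mxr (y (s' j)) (s (s' j)).
    by rewrite ys0' normr0 normr_le0 => /eqP.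
  + by rewrite -row_mx0; exact: cvg_row_mx.
  + by split; [exact: s_gt0 | rewrite scale_row_mx /= -y_sv normalizeK].
  + apply: contra_neq w0 => wd0.
    by have := normr_le_row_mxl w d; rewrite wd0 normr0 normr_le0 => /eqP.
Qed.

Hypotheses (r_gt0 : 0 < r) (L_ge0 : 0 <= L).
Hypothesis h_lipschitz : forall x y, eball0 r x -> eball0 r y ->
  enorm (h x - h y) <= L * enorm (x - y).

(* The ray through [row_mx w d] is shadowed by points [row_mx x (h x)] of the
   graph; reading off both blocks gives [x ~ |a| w] and [h x ~ |a| d]. *)
Lemma SSP_graph_ray (a : nat -> 'rV[R]_n) (w d : 'rV[R]_n) :
  SSP (graph h (eball0 r)) ->
  a @ \oo --> (0 : 'rV[R]_n) -> (\forall m \near \oo, a m != 0) ->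
  Dir (graph h (eball0 r)) (normalize (row_mx w d)) ->
  exists x : nat -> 'rV[R]_n, (forall m, eball0 r (x m)) /\
    (fun m => enorm (a m) *: w - x m) =o_\oo a /\
    (fun m => enorm (a m) *: d - h (x m)) =o_\oo a.
Proof.
move=> SG a0 a_neq0 DW; pose W := row_mx w d; pose z m := enorm (a m) *: W.
have zOa : z =O_\oo a.
  apply: (enorm_le_bigO (C := enorm W)); first exact: enorm_ge0.
  by apply: nearW => m; rewrite /z enormZ ger0_norm ?enorm_ge0 // mulrC.
have zW : (fun m => normalize (z m)) @ \oo --> normalize W.
  apply/cvgrPdist_le => e e0; apply: filterS a_neq0 => m am.
  by rewrite /z normalizeZ ?enorm_gt0 // subrr normr0 ltW.
have [b [Gb [/ll_eqo zb _]]] := SG z _ (bigO_cvg0 zOa a0) zW DW.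
have /choice [x xP] m : exists x, eball0 r x /\ row_mx x (h x) = b m.
  by case: (Gb m) => x Bx <-; exists x.
have zba : (fun m => row_mx (enorm (a m) *: w - x m) (enorm (a m) *: d - h (x m)))
    =o_\oo a.
  rewrite (_ : (fun m => _) = (fun m => z m - b m)); first exact: eqoO_trans zb zOa.
  by apply/funext => m; rewrite -(xP m).2 /z scale_row_mx opp_row_mx add_row_mx.
exists x; split; first by move=> m; case: (xP m).
by split; apply: eqOo_trans zba; [exact: row_mxl_eqO | exact: row_mxr_eqO].
Qed.

Lemma SSP_image (A : set 'rV[R]_n) :
  SSP A -> SSP (graph h (eball0 r)) -> SSP (h @` (A `&` eball0 r)).
Proof.
move=> SA SG a d a0 ad Dd.
have [w [w0 [DAw DGw]]] := Dir_image_lift Dd.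
have d0 : d != 0.
  by apply/eqP => d0; move: Dd.1; rewrite d0 enorm0 => /eqP; rewrite eq_sym oner_eq0.
have a_neq0 := cvg_normalize_neq0 ad d0.
have [x [xB [xw xd]]] := SSP_graph_ray SG a0 a_neq0 DGw.
have xOa : x =O_\oo a.
  apply: bigO_littleo_sub xw; apply: (enorm_le_bigO (C := enorm w)).
    exact: enorm_ge0.
  by apply: nearW => m; rewrite enormZ ger0_norm ?enorm_ge0 // mulrC.
have [b [Ab [/ll_eqo xb _]]] :=
  SA x _ (bigO_cvg0 xOa a0) (eqo_normalize_cvg xw a_neq0 w0) DAw.
have xba : (fun m => x m - b m) =o_\oo a := eqoO_trans xb xOa.
have b_in : \forall m \near \oo, (A `&` eball0 r) (b m).
  have b0 := bigO_cvg0 (bigO_littleo_sub xOa xba) a0.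
  have eb0 : (fun m => enorm (b m)) @ \oo --> 0.
    by rewrite -(@enorm0 R n); exact: cvg_comp _ _ b0 (@enorm_continuous R n 0).
  by apply: filterS (cvgr_lt _ eb0 _ r_gt0) => m bm; split; [exact: Ab | exact: bm].
(* (SSP) asks for [b m] in the set for every [m], not only eventually. *)
have [y0 y0_in] : exists y0, (A `&` eball0 r) y0.
  by have [s [s_in _]] := Dd.2; have [[y0 y0_in _] _] := s_in 0%N; exists y0.
have [b' [b'_in b'b]] := patch_near y0_in b_in.
have xb'a : (fun m => x m - b' m) =o_\oo a.
  by apply: littleo_near_eq xba; apply: filterS b'b => m ->.
have hxb'a : (fun m => h (x m) - h (b' m)) =o_\oo a.
  apply: eqOo_trans xb'a; apply: (enorm_le_bigO (C := L)) => //.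
  by apply: nearW => m; apply: h_lipschitz; [exact: xB | case: (b'_in m)].
exists (fun m => h (b' m)); split; first by move=> m; exists (b' m).
apply: ll_sub_eqo.
rewrite (_ : (fun m => _) = (fun m => a m - enorm (a m) *: d)
  + (fun m => enorm (a m) *: d - h (x m)) + (fun m => h (x m) - h (b' m))).
  by apply: add2o => //; apply: add2o => //; exact: normalize_cvg_eqo.
by apply/funext => m /=; rewrite !addrA !subrK.
Qed.

End SSPImage.

Unset Implicit Arguments. Set Strict Implicit.

Theorem theorem4p5 (R : realType) (n : nat) (h : 'rV[R]_n -> 'rV[R]_n)
    (A : set 'rV[R]_n) (r : R) :
  0 < r ->
  h 0 = 0 ->
  {in eball0 r &, injective h} ->
  {within eball0 r, continuous h} ->
  open (h @` eball0 r) ->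
  (exists g : 'rV[R]_n -> 'rV[R]_n,
      (forall x, eball0 r x -> g (h x) = x) /\
      {within h @` eball0 r, continuous g}) ->
  (exists L : R, 0 <= L /\ forall x y, eball0 r x -> eball0 r y ->
      enorm (h x - h y) <= L * enorm (x - y)) ->
  (exists c1 c2 : R, 0 < c1 /\ 0 < c2 /\ forall x, eball0 r x ->
      c1 * enorm x <= enorm (h x) /\ enorm (h x) <= c2 * enorm x) ->
  closure A 0 ->
  SSP A ->
  SSP (graph h (eball0 r)) ->
  SSP (h @` (A `&` eball0 r)).
Proof.
move=> r_gt0 h0 _ _ _ _ [L [L_ge0 h_lipschitz]] [c1 [c2 [c1_gt0 [c2_gt0 h_bounds]]]] _.
move=> SA SG; exact: (SSP_image c1_gt0 c2_gt0 h0 h_bounds r_gt0 L_ge0 h_lipschitz SA SG).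
Qed.
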